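(* Let $\Theta$ and $R$ be finite sets and $s_1:\Theta\to\Delta(R)$. Then $s_1$ is monotone with respect to some pair of total orders $(\succsim_\Theta,\succsim_R)$ if and only if the bipartite graph $G(s_1)$ is acyclic and does not contain a forbidden triple.
   Context: $s_1$ is monotone w.r.t. total orders $(\succsim_\Theta,\succsim_R)$ if for any $\theta\succ\theta'$, $r\in\mathrm{supp}(s_1(\theta))$, $r'\in\mathrm{supp}(s_1(\theta'))$, one has $r\succsim r'$. $G(s_1)$ is the bipartite graph with vertex classes $\Theta$ and $R$ in which $\theta$ and $r$ are joined iff $r\in\mathrm{supp}(s_1(\theta))$. A forbidden triple for $s_1$ is either (1) three distinct $r_1,r_2,r_3\in R$ and four distinct $\theta_1,\dots,\theta_4\in\Theta$ with $r_k\in\mathrm{supp}(s_1(\theta_k))$ for $k=1,2,3$ and $\{r_1,r_2,r_3\}\subset\mathrm{supp}(s_1(\theta_4))$; or (2) three distinct $\theta_1,\theta_2,\theta_3\in\Theta$ and four distinct $r_1,\dots,r_4\in R$ with $\{r_k,r_4\}\subset\mathrm{supp}(s_1(\theta_k))$ for $k=1,2,3$. *)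

From mathcomp Require Import all_boot all_order all_algebra.
Set Implicit Arguments. Unset Strict Implicit. Unset Printing Implicit Defensive.
Import Order.TTheory GRing.Theory Num.Theory.
Local Open Scope ring_scope.

Definition is_distr (F : realFieldType) (R : finType) (p : R -> F) : Prop :=
  (forall r, 0 <= p r) /\ \sum_(r : R) p r = 1.

Definition supp (F : realFieldType) (Th R : finType) (s1 : Th -> R -> F) (th : Th)
  : {set R} := [set r | s1 th r != 0].

Definition total_order (T : finType) (le : rel T) : Prop :=
  [/\ reflexive le, antisymmetric le, transitive le & total le].

Definition monotone (F : realFieldType) (Th R : finType) (s1 : Th -> R -> F)
  (leT : rel Th) (leR : rel R) : Prop :=
  forall th th' r r', leT th' th -> ~~ leT th th' ->
    r \in supp s1 th -> r' \in supp s1 th' -> leR r' r.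

Definition Gadj (F : realFieldType) (Th R : finType) (s1 : Th -> R -> F)
  : rel (Th + R) :=
  fun u v => match u, v with
             | inl th, inr r => r \in supp s1 th
             | inr r, inl th => r \in supp s1 th
             | _, _ => false
             end.

Definition acyclic_graph (V : finType) (e : rel V) : Prop :=
  forall c : seq V, (3 <= size c)%N -> ~~ ucycleb e c.

Definition forbidden_triple (F : realFieldType) (Th R : finType)
  (s1 : Th -> R -> F) : Prop :=
  (exists (r1 r2 r3 : R) (t1 t2 t3 t4 : Th),
      uniq [:: r1; r2; r3] /\ uniq [:: t1; t2; t3; t4] /\
      r1 \in supp s1 t1 /\ r2 \in supp s1 t2 /\ r3 \in supp s1 t3 /\
      [/\ r1 \in supp s1 t4, r2 \in supp s1 t4 & r3 \in supp s1 t4])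
  \/
  (exists (t1 t2 t3 : Th) (r1 r2 r3 r4 : R),
      uniq [:: t1; t2; t3] /\ uniq [:: r1; r2; r3; r4] /\
      [/\ r1 \in supp s1 t1, r2 \in supp s1 t2 & r3 \in supp s1 t3] /\
      [/\ r4 \in supp s1 t1, r4 \in supp s1 t2 & r4 \in supp s1 t3]).

From mathcomp Require Import all_boot all_order all_algebra perm zify.
Set Implicit Arguments. Unset Strict Implicit. Unset Printing Implicit Defensive.
Import Order.TTheory GRing.Theory Num.Theory.
Local Open Scope ring_scope.

(* Encode total orders by injective integer ranks. Monotonicity then says that
   G(s1), drawn with Θ and R on two parallel lines in rank order, has no two
   crossing edges. In such a drawing the two cycle neighbours of the highest
   Θ-vertex on a cycle both continue to lower Θ-vertices, which forces a
   crossing, and the middle leg of a subdivided claw crosses an outer leg; so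
   cycles and forbidden triples are excluded.
   Conversely, induct on the number of edges: an acyclic graph with an edge has
   a leaf; draw the graph without a pendant edge uv and put the new leaf v
   right next to a neighbour m of u. This only fails when u lies strictly
   between the lowest and highest neighbours of m, and then either one of
   these has m as its only neighbour, so it can trade places with u, or both
   have further neighbours, which together with u, v form a subdivided claw
   around m. *)

Section AcyclicGraph.

Variables (V : finType) (e : rel V).
Hypotheses (e_sym : symmetric e) (e_irr : irreflexive e) (e_acyc : acyclic_graph e).

Lemma acyclic_path_neighbor x y p z :
  path e x (y :: p) -> uniq [:: x, y & p] -> e x z -> z \in y :: p -> z = y.
Proof.
move=> pth un xz; rewrite inE => /orP[/eqP // | zp].
case/splitPr: zp pth un => p1 p2 pth un.
have cycle_size : (3 <= size [:: x, y & rcons p1 z])%N by rewrite /= size_rcons.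
have /negP[] := e_acyc cycle_size.
rewrite /ucycleb /cycle rcons_path last_cons last_rcons (e_sym z) xz andbT.
move: pth un; rewrite -cat_rcons -!cat_cons cat_path cat_uniq.
by case/andP=> -> _ /andP[->].
Qed.

Lemma acyclic_leaf_exists x0 y0 : e x0 y0 -> exists x y, e x y /\ forall z, e x z -> z = y.
Proof.
suff grow n x y p : path e x (y :: p) -> uniq [:: x, y & p] -> (#|V| <= n + size p)%N ->
    exists x y, e x y /\ forall z, e x z -> z = y.
  move=> e0; apply: (grow #|V| x0 y0 [::]); rewrite /= ?e0 ?addn0 // andbT inE.
  by apply: contraTneq e0 => <-; rewrite e_irr.
elim: n x y p => [|n IHn] x y p pth un sz.
  have : (size [:: x, y & p] <= #|V|)%N by rewrite -(card_uniqP un) max_card.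
  by rewrite [size _]/=; lia.
case: (pickP (fun z => e x z && (z \notin [:: x, y & p]))) => [z /andP[xz zn] | closed].
  apply: (IHn z x (y :: p)); first by rewrite /= e_sym xz.
    by rewrite cons_uniq zn.
  by rewrite addnS -addSn.
exists x, y; split; first by case/andP: pth.
move=> z xz; apply: (acyclic_path_neighbor pth un xz).
move: (closed z); rewrite xz inE => /negbFE/orP[/eqP zx|//].
by move: xz; rewrite zx e_irr.
Qed.

End AcyclicGraph.

Lemma next_neq_prev (T : eqType) (c : seq T) x :
  uniq c -> (3 <= size c)%N -> x \in c -> next c x != prev c x.
Proof.
move=> uc + /rot_to[i s rot_c].
rewrite -(next_rot i uc) -(prev_rot i uc) -(size_rot i) rot_c.
rewrite -(rot_uniq i) rot_c in uc => sz; apply/eqP => nx_px.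
have := next_prev uc x; rewrite -nx_px.
case: s uc sz {rot_c nx_px} => [|y [|z t]] uc //= _; rewrite eqxx.
move: uc; rewrite /= !inE !negb_or -!andbA => /and5P[xy xz _ yz _].
by rewrite eq_sym (negbTE xy) eqxx => zx; rewrite zx eqxx in xz.
Qed.

Definition noncrossing {A B : finType} (E : A -> B -> bool) (rA : A -> int) (rB : B -> int) :=
  forall a a' b b', E a b -> E a' b' -> rA a' < rA a -> rB b' <= rB b.

Definition two_layer_planar {A B : finType} (E : A -> B -> bool) :=
  exists (rA : A -> int) (rB : B -> int), [/\ injective rA, injective rB & noncrossing E rA rB].

Definition subdivided_claw {A B : finType} (E : A -> B -> bool) :=
  exists (a1 a2 a3 : A) (b1 b2 b3 b : B),
    uniq [:: a1; a2; a3] /\ uniq [:: b1; b2; b3; b] /\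
    [/\ E a1 b1, E a2 b2 & E a3 b3] /\ [/\ E a1 b, E a2 b & E a3 b].

Definition bigraph {A B : finType} (E : A -> B -> bool) : rel (A + B) :=
  fun x y => match x, y with
             | inl a, inr b | inr b, inl a => E a b
             | _, _ => false
             end.

Definition add_edge {A B : finType} (E : A -> B -> bool) u v : A -> B -> bool :=
  fun a b => E a b || (a == u) && (b == v).

Section Noncrossing.

Variables (A B : finType) (E : A -> B -> bool) (rA : A -> int) (rB : B -> int).

Lemma noncrossing_transpose :
  noncrossing E rA rB -> noncrossing (fun b a => E a b) rB rA.
Proof.
move=> ncr b b' a a' Eab Ea'b'; rewrite leNgt; apply: contraTN.
by rewrite -leNgt; apply: ncr Ea'b' Eab.
Qed.

Lemma noncrossing_opp (rA' : A -> int) (rB' : B -> int) :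
  (forall a, rA' a = - rA a) -> (forall b, rB' b = - rB b) ->
  noncrossing E rA rB -> noncrossing E rA' rB'.
Proof.
move=> eA eB ncr a a' b b' Eab Ea'b'; rewrite !eA !eB ltrN2 lerN2.
exact: ncr Ea'b' Eab.
Qed.

Lemma noncrossing_sub (E' : A -> B -> bool) :
  (forall a b, E' a b -> E a b) -> noncrossing E rA rB -> noncrossing E' rA rB.
Proof. by move=> sE ncr a a' b b' /sE Eab /sE; apply: ncr. Qed.

Lemma noncrossing_perm (s : {perm A}) :
  (forall a b, E (s a) b = E a b) -> noncrossing E rA rB -> noncrossing E (rA \o s) rB.
Proof. by move=> Es ncr a a' b b' Eab Ea'b'; apply: ncr; rewrite Es. Qed.

End Noncrossing.

Section Bigraph.

Variables (A B : finType) (E : A -> B -> bool).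

Lemma bigraph_sym : symmetric (bigraph E).
Proof. by move=> [a|b] [a'|b']. Qed.

Lemma bigraph_irr : irreflexive (bigraph E).
Proof. by move=> [a|b]. Qed.

Lemma bigraph_inlP a y : bigraph E (inl a) y -> exists2 b, y = inr b & E a b.
Proof. by case: y => // b Eab; exists b. Qed.

Lemma bigraph_inrP b y : bigraph E (inr b) y -> exists2 a, y = inl a & E a b.
Proof. by case: y => // a Eab; exists a. Qed.

Lemma acyclic_bigraph_sub (E' : A -> B -> bool) :
  (forall a b, E' a b -> E a b) -> acyclic_graph (bigraph E) -> acyclic_graph (bigraph E').
Proof.
move=> sE acyc c sz; apply: contra (acyc c sz) => /andP[cyc uc].
by rewrite /ucycleb uc andbT; apply: sub_cycle cyc => -[a|b] [a'|b'] //= /sE.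
Qed.

Lemma subdivided_claw_sub (E' : A -> B -> bool) :
  (forall a b, E a b -> E' a b) -> subdivided_claw E -> subdivided_claw E'.
Proof.
move=> sE [a1 [a2 [a3 [b1 [b2 [b3 [b [ua [ub [[E1 E2 E3] [E1b E2b E3b]]]]]]]]]]].
by exists a1, a2, a3, b1, b2, b3, b; do 2 split => //; split; split; apply: sE.
Qed.

Lemma two_layer_planar_sub (E' : A -> B -> bool) :
  (forall a b, E' a b -> E a b) -> two_layer_planar E -> two_layer_planar E'.
Proof.
move=> sE [rA [rB [injA injB ncr]]].
by exists rA, rB; split => //; apply: noncrossing_sub ncr.
Qed.

Lemma two_layer_planar_transpose :
  two_layer_planar E -> two_layer_planar (fun b a => E a b).
Proof.
move=> [rA [rB [injA injB ncr]]].
by exists rB, rA; split => //; apply: noncrossing_transpose.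
Qed.

Lemma two_layer_planar_edgeless : (forall a b, ~~ E a b) -> two_layer_planar E.
Proof.
move=> no_edge; exists (fun a => Posz (enum_rank a)), (fun b => Posz (enum_rank b)).
split; try by move=> x y [] /ord_inj /enum_rank_inj.
by move=> a a' b b' Eab; have := no_edge a b; rewrite Eab.
Qed.

Lemma pendant_edge_exists u0 v0 : acyclic_graph (bigraph E) -> E u0 v0 ->
  exists u v, E u v /\ ((forall a, E a v -> a = u) \/ (forall b, E u b -> b = v)).
Proof.
move=> acyc Euv0.
have [x [y [xy x_leaf]]] :=
  acyclic_leaf_exists bigraph_sym bigraph_irr acyc (Euv0 : bigraph E (inl u0) (inr v0)).
case: x y xy x_leaf => [a|b] [a'|b'] //= Eab x_leaf.
  by exists a, b'; split => //; right => b /(x_leaf (inr b)) [].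
by exists a', b; split => //; left => a /(x_leaf (inl a)) [].
Qed.

Lemma noncrossing_acyclic rA rB :
  injective rA -> injective rB -> noncrossing E rA rB -> acyclic_graph (bigraph E).
Proof.
move=> injA injB ncr c sz; apply/negP => /andP[cyc uc].
have [a0 a0c] : exists a, inl a \in c.
  have [x xc] : exists x, x \in c by case: c sz {cyc uc} => [|x c'] //; exists x; rewrite mem_head.
  case: x xc => [a|b] xc; first by exists a.
  have [a na _] := bigraph_inrP (next_cycle cyc xc).
  by exists a; rewrite -na mem_next.
have [a ac a_max] := @arg_maxP _ _ _ a0 (fun a => inl a \in c) rA a0c.
have next_inj := can_inj (prev_next uc); have prev_inj := can_inj (next_prev uc).
have next_prev_a := next_neq_prev uc sz ac.
have [b1 nb1 Eab1] := bigraph_inlP (next_cycle cyc ac).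
have /bigraph_inlP[b2 pb2 Eab2] : bigraph E (inl a) (prev c (inl a)).
  by rewrite bigraph_sym; apply: prev_cycle.
have /bigraph_inrP[a1 na1 Ea1b1] : bigraph E (inr b1) (next c (inr b1)).
  by apply: next_cycle cyc _; rewrite -nb1 mem_next.
have /bigraph_inrP[a2 pa2 Ea2b2] : bigraph E (inr b2) (prev c (inr b2)).
  by rewrite bigraph_sym; apply: prev_cycle cyc _; rewrite -pb2 mem_prev.
rewrite nb1 pb2 in next_prev_a.
have a1a : a1 != a.
  apply: contraNneq next_prev_a => a1a; apply/eqP/next_inj.
  by rewrite na1 a1a -pb2 next_prev.
have a2a : a2 != a.
  apply: contraNneq next_prev_a => a2a; apply/eqP/prev_inj.
  by rewrite pa2 a2a -nb1 prev_next.
have lt1 : rA a1 < rA a.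
  by rewrite lt_neqAle (inj_eq injA) a1a; apply: a_max; rewrite -na1 mem_next -nb1 mem_next.
have lt2 : rA a2 < rA a.
  by rewrite lt_neqAle (inj_eq injA) a2a; apply: a_max; rewrite -pa2 mem_prev -pb2 mem_prev.
move/eqP: next_prev_a; apply; congr inr; apply: injB; apply: le_anti.
by rewrite (ncr _ _ _ _ Eab1 Ea2b2 lt2) (ncr _ _ _ _ Eab2 Ea1b1 lt1).
Qed.

Lemma noncrossing_no_subdivided_claw rA rB :
  injective rA -> injective rB -> noncrossing E rA rB -> ~ subdivided_claw E.
Proof.
move=> injA injB ncr [a1 [a2 [a3 [b1 [b2 [b3 [b [ua [ub [[E1 E2 E3] [E1b E2b E3b]]]]]]]]]]].
have middle x y z y' : rA x < rA y < rA z -> E x b -> E y b -> E z b -> E y y' -> y' = b.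
  move=> /andP[xy yz] xb yb zb yy'; apply: injB; apply: le_anti.
  by rewrite (ncr _ _ _ _ zb yy' yz) (ncr _ _ _ _ yy' xb xy).
move: ua ub; rewrite /= !inE !negb_or.
move=> /and3P[/andP[n12 n13] n23 _] /and4P[/and3P[_ _ b1b] /andP[_ b2b] b3b _].
have [d12 d13 d23] : [/\ rA a1 != rA a2, rA a1 != rA a3 & rA a2 != rA a3].
  by rewrite !(inj_eq injA).
have : (rA a1 < rA a2 < rA a3) \/ (rA a1 < rA a3 < rA a2) \/ (rA a2 < rA a1 < rA a3) \/
       (rA a2 < rA a3 < rA a1) \/ (rA a3 < rA a1 < rA a2) \/ (rA a3 < rA a2 < rA a1).
  by lia.
case=> [|[|[|[|[|]]]]] /middle mid.
- by rewrite (mid _ E1b E2b E3b E2) eqxx in b2b.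
- by rewrite (mid _ E1b E3b E2b E3) eqxx in b3b.
- by rewrite (mid _ E2b E1b E3b E1) eqxx in b1b.
- by rewrite (mid _ E2b E3b E1b E3) eqxx in b3b.
- by rewrite (mid _ E3b E1b E2b E1) eqxx in b1b.
- by rewrite (mid _ E3b E2b E1b E2) eqxx in b2b.
Qed.

End Bigraph.

Lemma exists_strict_ub (T : finType) (r : T -> int) : exists M, forall x, r x < M.
Proof.
exists (\big[Order.max/0]_x r x + 1) => x.
by rewrite ltzD1; apply: (bigmax_sup x).
Qed.

Lemma rank_lt_neq (T : eqType) (r : T -> int) x y : r x < r y -> x != y.
Proof. by apply: contraTneq => ->; rewrite ltxx. Qed.

Section AddPendantEdge.

Variables (A B : finType) (E : A -> B -> bool) (u : A) (v : B).
Hypothesis v_isolated : forall a, ~~ E a v.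

Let E_neq_v a b : E a b -> b != v.
Proof. by apply: contraTneq => ->; apply: v_isolated. Qed.

Lemma add_isolated_edge rA rB :
  injective rA -> injective rB -> noncrossing E rA rB -> (forall b, ~~ E u b) ->
  two_layer_planar (add_edge E u v).
Proof.
move=> injA injB ncr u_isolated.
have E_neq_u a b : E a b -> a != u by apply: contraTneq => ->; apply: u_isolated.
have [[MA ltMA] [MB ltMB]] := (exists_strict_ub rA, exists_strict_ub rB).
exists (fun a => if a == u then MA else rA a), (fun b => if b == v then MB else rB b).
split.
- move=> a a'; case: eqP => [->|_]; case: eqP => [->|_] //; last exact: injA.
    by have := ltMA a'; lia.
  by have := ltMA a; lia.
- move=> b b'; case: eqP => [->|_]; case: eqP => [->|_] //; last exact: injB.
    by have := ltMB b'; lia.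
  by have := ltMB b; lia.
move=> a a' b b' /orP[Eab|/andP[/eqP-> /eqP->]] /orP[Ea'b'|/andP[/eqP-> /eqP->]].
- rewrite (negbTE (E_neq_u _ _ Eab)) (negbTE (E_neq_v Eab)).
  rewrite (negbTE (E_neq_u _ _ Ea'b')) (negbTE (E_neq_v Ea'b')).
  exact: ncr.
- by rewrite !eqxx (negbTE (E_neq_u _ _ Eab)) (negbTE (E_neq_v Eab)); have := ltMA a; lia.
- by rewrite !eqxx (negbTE (E_neq_u _ _ Ea'b')) (negbTE (E_neq_v Ea'b')); have := ltMB b'; lia.
- by rewrite ltxx.
Qed.

Lemma add_edge_above rA rB m :
  injective rB -> noncrossing E rA rB -> E u m -> (forall a, E a m -> rA a <= rA u) ->
  exists rB', injective rB' /\ noncrossing (add_edge E u v) rA rB'.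
Proof.
move=> injB ncr um m_below.
have m_gt a b : E a b -> rA u < rA a -> rB m < rB b.
  move=> Eab ua; rewrite lt_neqAle (ncr _ _ _ _ Eab um ua) andbT.
  by apply: contraTneq ua => /injB mb; rewrite -leNgt m_below // mb.
(* v takes the slot right above m, everything above m moves up by one *)
exists (fun b => if b == v then rB m + 1 else if rB m < rB b then rB b + 1 else rB b).
split.
  move=> b b'; case: eqP => [->|_]; case: eqP => [->|_] //;
    do ![case: ifP => ? //] => *; try apply: injB; lia.
move=> a a' b b' /orP[Eab|/andP[/eqP-> /eqP->]] /orP[Ea'b'|/andP[/eqP-> /eqP->]] lt.
- have := ncr _ _ _ _ Eab Ea'b' lt.
  by rewrite (negbTE (E_neq_v Eab)) (negbTE (E_neq_v Ea'b')); do ![case: ifP => ?]; lia.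
- have := m_gt _ _ Eab lt.
  by rewrite eqxx (negbTE (E_neq_v Eab)); case: ifP => ?; lia.
- have := ncr _ _ _ _ um Ea'b' lt.
  by rewrite eqxx (negbTE (E_neq_v Ea'b')); case: ifP => ?; lia.
- by rewrite ltxx in lt.
Qed.

Lemma add_edge_below rA rB m :
  injective rB -> noncrossing E rA rB -> E u m -> (forall a, E a m -> rA u <= rA a) ->
  exists rB', injective rB' /\ noncrossing (add_edge E u v) rA rB'.
Proof.
move=> injB ncr um m_above.
have injB_opp : injective (fun b => - rB b) by move=> b b' /oppr_inj /injB.
have m_below a : E a m -> - rA a <= - rA u by move/m_above; rewrite lerN2.
have ncr_opp : noncrossing E (fun a => - rA a) (fun b => - rB b).
  exact: noncrossing_opp ncr.
have [rB' [injB' ncr']] := add_edge_above injB_opp ncr_opp um m_below.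
exists (fun b => - rB' b); split; first by move=> b b' /oppr_inj /injB'.
by apply: noncrossing_opp ncr' => *; rewrite ?opprK.
Qed.

(* Exchanging u with a vertex w of the same neighbourhood is a graph automorphism,
   so u may take the place of w at an end of the neighbourhood of m. *)
Lemma add_edge_twin_min rA rB w m :
  injective rA -> injective rB -> noncrossing E rA rB ->
  (forall b, E w b = E u b) -> E w m -> (forall a, E a m -> rA w <= rA a) ->
  two_layer_planar (add_edge E u v).
Proof.
move=> injA injB ncr twin wm w_min.
have Es a b : E (tperm u w a) b = E a b by case: tpermP => [->|->|//]; rewrite twin.
have um : E u m by rewrite -twin.
have u_min a : E a m -> (rA \o tperm u w) u <= (rA \o tperm u w) a.
  by rewrite -Es /= tpermL; apply: w_min.
have [rB' [injB' ncr']] := add_edge_below injB (noncrossing_perm Es ncr) um u_min.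
by exists (rA \o tperm u w), rB'; split => //; apply: inj_comp injA perm_inj.
Qed.

Lemma add_edge_twin_max rA rB w m :
  injective rA -> injective rB -> noncrossing E rA rB ->
  (forall b, E w b = E u b) -> E w m -> (forall a, E a m -> rA a <= rA w) ->
  two_layer_planar (add_edge E u v).
Proof.
move=> injA injB ncr twin wm w_max.
have Es a b : E (tperm u w a) b = E a b by case: tpermP => [->|->|//]; rewrite twin.
have um : E u m by rewrite -twin.
have u_max a : E a m -> (rA \o tperm u w) a <= (rA \o tperm u w) u.
  by rewrite -Es /= tpermL; apply: w_max.
have [rB' [injB' ncr']] := add_edge_above injB (noncrossing_perm Es ncr) um u_max.
by exists (rA \o tperm u w), rB'; split => //; apply: inj_comp injA perm_inj.
Qed.

Lemma add_pendant_edge rA rB :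
  injective rA -> injective rB -> noncrossing E rA rB ->
  ~ subdivided_claw (add_edge E u v) -> two_layer_planar (add_edge E u v).
Proof.
move=> injA injB ncr no_claw.
have [m um | u_isolated] := pickP (E u); last first.
  by apply: add_isolated_edge injA injB ncr _ => b; rewrite u_isolated.
have [lo lom lo_min] := @arg_minP _ _ _ u (E^~ m) rA um.
have [hi him hi_max] := @arg_maxP _ _ _ u (E^~ m) rA um.
have [u_lo | lo_u] := leP (rA u) (rA lo).
  by apply: (add_edge_twin_min injA injB ncr _ um) => // a /lo_min; apply: le_trans.
have [hi_u | u_hi] := leP (rA hi) (rA u).
  by apply: (add_edge_twin_max injA injB ncr _ um) => // a /hi_max /le_trans; apply.
have u_leaf b : E u b -> b = m.
  move=> ub; apply: injB; apply: le_anti.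
  by rewrite (ncr _ _ _ _ him ub u_hi) (ncr _ _ _ _ ub lom lo_u).
have twin w : E w m -> (forall b, E w b -> b = m) -> forall b, E w b = E u b.
  by move=> wm w_leaf b; apply/idP/idP => [/w_leaf|/u_leaf] ->.
have [x /andP[lox xm] | lo_leaf] := pickP (fun b => E lo b && (b != m)); last first.
  apply: (add_edge_twin_min injA injB ncr _ lom lo_min); apply: twin lom _ => b lob.
  by apply/eqP; move: (lo_leaf b); rewrite lob => /negbFE.
have [y /andP[hiy ym] | hi_leaf] := pickP (fun b => E hi b && (b != m)); last first.
  apply: (add_edge_twin_max injA injB ncr _ him hi_max); apply: twin him _ => b hib.
  by apply/eqP; move: (hi_leaf b); rewrite hib => /negbFE.
have lo_hi := lt_trans lo_u u_hi.
have x_m : rB x < rB m by rewrite lt_neqAle (inj_eq injB) xm (ncr _ _ _ _ him lox lo_hi).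
have m_y : rB m < rB y.
  by rewrite lt_neqAle (inj_eq injB) eq_sym ym (ncr _ _ _ _ hiy lom lo_hi).
case: no_claw; exists lo, u, hi, x, v, y, m; split; last split.
- by rewrite /= !inE !negb_or (rank_lt_neq lo_u) (rank_lt_neq lo_hi) (rank_lt_neq u_hi).
- rewrite /= !inE !negb_or (E_neq_v lox) (rank_lt_neq (lt_trans x_m m_y)) xm ym.
  by rewrite [v == y]eq_sym (E_neq_v hiy) [v == m]eq_sym (E_neq_v um).
- by rewrite /add_edge lox hiy lom um him !eqxx !orbT.
Qed.

End AddPendantEdge.

Theorem two_layer_planarP (A B : finType) (E : A -> B -> bool) :
  two_layer_planar E <->
  [/\ acyclic_graph (bigraph E), ~ subdivided_claw E & ~ subdivided_claw (fun b a => E a b)].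
Proof.
split=> [[rA [rB [injA injB ncr]]] | ].
  split; [exact: noncrossing_acyclic ncr | exact: noncrossing_no_subdivided_claw ncr |].
  exact: noncrossing_no_subdivided_claw (noncrossing_transpose ncr).
have [n] := ubnP #|[set p : A * B | E p.1 p.2]|.
elim: n E => // n IHn E card_lt [acyc no_claw no_clawT].
have [[u0 v0] /= Euv0 | no_edge] := pickP (fun p : A * B => E p.1 p.2); last first.
  by apply: two_layer_planar_edgeless => a b; rewrite (no_edge (a, b)).
have [u [v [Euv leaf]]] := pendant_edge_exists acyc Euv0.
pose E' a b := E a b && ((a != u) || (b != v)).
have E'E a b : E' a b -> E a b by case/andP.
have E'uvE a b : add_edge E' u v a b -> E a b by case/orP => [/E'E | /andP[/eqP-> /eqP->]].
have EE'uv a b : E a b -> add_edge E' u v a b.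
  by rewrite /add_edge /E' => ->; case: (a == u); case: (b == v).
have [rA [rB [injA injB ncr]]] : two_layer_planar E'.
  apply: IHn; last split.
  - have : (#|[set p : A * B | E' p.1 p.2]| < #|[set p : A * B | E p.1 p.2]|)%N.
      apply/proper_card/properP; split; first by apply/subsetP => -[a b]; rewrite !inE => /E'E.
      by exists (u, v); rewrite !inE /= ?Euv // /E' !eqxx andbF.
    by lia.
  - exact: acyclic_bigraph_sub E'E acyc.
  - by move/(subdivided_claw_sub E'E).
  - by move/(subdivided_claw_sub (fun b a => @E'E a b)).
case: leaf => [v_leaf | u_leaf].
  have v_isolated a : ~~ E' a v by apply/negP => /andP[/v_leaf ->]; rewrite !eqxx.
  apply: (two_layer_planar_sub EE'uv); apply: (add_pendant_edge v_isolated injA injB ncr).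
  by move/(subdivided_claw_sub E'uvE).
have u_isolated b : ~~ E' u b by apply/negP => /andP[/u_leaf ->]; rewrite !eqxx.
have E'uvET b a : add_edge (fun b a => E' a b) v u b a -> E a b.
  by rewrite /add_edge andbC; apply: E'uvE.
have : two_layer_planar (add_edge (fun b a => E' a b) v u).
  apply: (add_pendant_edge u_isolated injB injA (noncrossing_transpose ncr)).
  by move/(subdivided_claw_sub E'uvET).
move/two_layer_planar_transpose; apply: two_layer_planar_sub => a b /EE'uv.
by rewrite /add_edge andbC.
Qed.

Lemma total_order_rank (T : finType) (le : rel T) :
  total_order le -> exists r : T -> int, injective r /\ forall x y, le x y = (r x <= r y).
Proof.
case=> le_refl le_anti le_tr le_total.
pose r x : int := #|[pred y | le y x]|.
have r_mono x y : le x y -> r x <= r y.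
  move=> xy; rewrite lez_nat subset_leq_card //.
  by apply/subsetP => z; rewrite !inE => /le_tr; apply.
have r_strict x y : ~~ le x y -> r y < r x.
  move=> nxy; rewrite ltz_nat; apply/proper_card/properP; split.
    apply/subsetP => z; rewrite !inE => /le_tr; apply.
    by have := le_total x y; rewrite (negbTE nxy).
  by exists x; rewrite !inE ?le_refl.
have leE x y : le x y = (r x <= r y).
  by apply/idP/idP => [/r_mono // |]; apply: contraTT => /r_strict; rewrite -ltNge.
by exists r; split => // x y rxy; apply: le_anti; rewrite !leE rxy lexx.
Qed.

Lemma rank_total_order (T : finType) (r : T -> int) :
  injective r -> total_order (fun x y => r x <= r y).
Proof.
move=> injr; split=> [x | x y /le_anti/injr // | y x z | x y]; first exact: lexx.
  exact: le_trans.
exact: le_total.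
Qed.

Lemma forbidden_tripleE (F : realFieldType) (Th R : finType) (s1 : Th -> R -> F) :
  forbidden_triple s1 <->
  subdivided_claw (fun r th => r \in supp s1 th) \/ subdivided_claw (fun th r => r \in supp s1 th).
Proof.
split=> -[f | f]; [left | by right | left | by right].
  move: f => [r1 [r2 [r3 [t1 [t2 [t3 [t4 [ur [ut [h1 [h2 [h3 [h4 h5 h6]]]]]]]]]]]]].
  by exists r1, r2, r3, t1, t2, t3, t4.
move: f => [r1 [r2 [r3 [t1 [t2 [t3 [t4 [ur [ut [[h1 h2 h3] [h4 h5 h6]]]]]]]]]]].
by exists r1, r2, r3, t1, t2, t3, t4.
Qed.

Lemma monotone_rankE (F : realFieldType) (Th R : finType) (s1 : Th -> R -> F)
  (rT : Th -> int) (rR : R -> int) :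
  monotone s1 (fun x y => rT x <= rT y) (fun x y => rR x <= rR y) <->
  noncrossing (fun th r => r \in supp s1 th) rT rR.
Proof.
split=> mono th th' r r'.
  by move=> hr hr' lt; apply: mono hr hr'; [exact: ltW | rewrite -ltNge].
by move=> le nle hr hr'; apply: mono hr hr' _; rewrite ltNge.
Qed.

Theorem proposition10 (F : realFieldType) (Th R : finType) (s1 : Th -> R -> F)
  (hs1 : forall th, is_distr (s1 th)) :
  (exists (leT : rel Th) (leR : rel R),
      total_order leT /\ total_order leR /\ monotone s1 leT leR)
  <-> (acyclic_graph (Gadj s1) /\ ~ forbidden_triple s1).
Proof.
(* only the supports of s1 matter *)
pose E th r := r \in supp s1 th.
rewrite forbidden_tripleE; split.
  case=> leT [leR [/total_order_rank[rT [injT leTE]] [/total_order_rank[rR [injR leRE]] mono]]].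
  have /two_layer_planarP[acyc noclaw noclawT] : two_layer_planar E.
    exists rT, rR; split => //; apply/monotone_rankE => th th' r r'.
    by rewrite -!leTE -leRE; apply: mono.
  by split => // -[].
case=> acyc no_forbidden.
have [rT [rR [injT injR ncr]]] : two_layer_planar E.
  by apply/two_layer_planarP; split => // claw; apply: no_forbidden; [right | left].
exists (fun x y => rT x <= rT y), (fun x y => rR x <= rR y).
by split; [exact: rank_total_order | split; [exact: rank_total_order | exact/monotone_rankE]].
Qed.
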